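(* Let $d\ge1$ and let $T:\mathbb{R}^d\to\mathbb{R}^d$ be the translation $T(x)=x+e_1$, where $e_1=(1,0,\ldots,0)$. Then $T$ does not satisfy the topological shadowing property.
   Context: Let $(X,d)$ be a metric space and $f:X\to X$ a homeomorphism; $\mathcal{C}^+=\{\epsilon:X\to\mathbb{R}^+ : \epsilon \text{ continuous}\}$. For $\delta\in\mathcal{C}^+$, a sequence $\{x_n\}_{n\in\mathbb{Z}}\subset X$ is a $\delta$-pseudo-orbit of $f$ if $d(f(x_n),x_{n+1})<\delta(f(x_n))$ for every $n\in\mathbb{Z}$. For $\epsilon\in\mathcal{C}^+$, the sequence $\{x_n\}$ is $\epsilon$-shadowed by an orbit if there is $y\in X$ with $d(f^n(y),x_n)<\epsilon(x_n)$ for every $n\in\mathbb{Z}$. The homeomorphism $f$ satisfies the topological shadowing property if for every $\epsilon\in\mathcal{C}^+$ there exists $\delta\in\mathcal{C}^+$ such that every $\delta$-pseudo-orbit is $\epsilon$-shadowed by an orbit. $\mathbb{R}^d$ carries the Euclidean metric. *)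

From Stdlib Require Import Reals Lra Lia ZArith Arith.
Open Scope R_scope.

Definition continuous_on_metric {X : Type} (dist : X -> X -> R) (e : X -> R) : Prop :=
  forall x, forall eta, 0 < eta ->
    exists del, 0 < del /\ forall y, dist x y < del -> Rabs (e y - e x) < eta.

Definition Cplus {X : Type} (dist : X -> X -> R) (e : X -> R) : Prop :=
  (forall x, 0 < e x) /\ continuous_on_metric dist e.

Definition Zpow {X : Type} (f finv : X -> X) (n : Z) (y : X) : X :=
  match n with
  | Z0 => y
  | Zpos p => Nat.iter (Pos.to_nat p) f y
  | Zneg p => Nat.iter (Pos.to_nat p) finv y
  end.

Definition pseudo_orbit {X : Type} (dist : X -> X -> R) (f : X -> X)
  (delta : X -> R) (x : Z -> X) : Prop :=
  forall n : Z, dist (f (x n)) (x (n + 1)%Z) < delta (f (x n)).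

Definition eps_shadowed {X : Type} (dist : X -> X -> R) (f finv : X -> X)
  (eps : X -> R) (x : Z -> X) : Prop :=
  exists y : X, forall n : Z, dist (Zpow f finv n y) (x n) < eps (x n).

Definition topological_shadowing {X : Type} (dist : X -> X -> R) (f finv : X -> X) : Prop :=
  forall eps, Cplus dist eps ->
    exists delta, Cplus dist delta /\
      forall x : Z -> X, pseudo_orbit dist f delta x -> eps_shadowed dist f finv eps x.

Definition Rd (d : nat) : Type := {x : nat -> R | forall i, (d <= i)%nat -> x i = 0}.

Definition coord {d : nat} (x : Rd d) (i : nat) : R := proj1_sig x i.

Definition euclid_dist (d : nat) (x y : Rd d) : R :=
  sqrt (sum_f_R0 (fun i => (coord x i - coord y i) ^ 2) (d - 1)).

(* coordinates of e_1 = (1,0,...,0) (index 0 is the first coordinate) *)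
Definition e1f (d i : nat) : R := if andb (Nat.eqb i 0) (Nat.ltb i d) then 1 else 0.

Lemma e1f_out (d i : nat) : (d <= i)%nat -> e1f d i = 0.
Proof.
  intro H; unfold e1f. destruct (Nat.ltb_spec i d); [lia|].
  rewrite Bool.andb_false_r; reflexivity.
Qed.

Definition translate (d : nat) (x : Rd d) : Rd d.
Proof.
  refine (exist _ (fun i => coord x i + e1f d i) _).
  intros i Hi. unfold coord. rewrite (proj2_sig x i Hi), (e1f_out d i Hi). lra.
Defined.

Definition translate_inv (d : nat) (x : Rd d) : Rd d.
Proof.
  refine (exist _ (fun i => coord x i - e1f d i) _).
  intros i Hi. unfold coord. rewrite (proj2_sig x i Hi), (e1f_out d i Hi). lra.
Defined.

From Stdlib Require Import Reals ZArith Arith Lra Lia.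
Open Scope R_scope.

(* Take eps(x) = 1 / (1 + |x_1|), which tends to 0 at infinity along the e_1-axis, and
   the pseudo-orbit that follows the orbit of 0 up to time 0 and then jumps ahead by s > 0.
   A shadowing point y would stay within 1/(1 + m) of x_{-m} and of x_m for every m; since
   T^m moves every point by exactly m e_1, its first coordinate would be within 1/(1 + m)
   of both 0 and s, which is impossible for m > 2/s. *)

Lemma sum_f_R0_ge_first (g : nat -> R) (n : nat) :
  (forall i, 0 <= g i) -> g 0%nat <= sum_f_R0 g n.
Proof.
  intro Hg; induction n as [|n IH]; simpl; [lra|]. specialize (Hg (S n)). lra.
Qed.

Lemma sum_f_R0_eq_first (g : nat -> R) (n : nat) :
  (forall i, (1 <= i)%nat -> g i = 0) -> sum_f_R0 g n = g 0%nat.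
Proof.
  intro Hg; induction n as [|n IH]; simpl; [lra|]. rewrite IH, (Hg (S n)); [lra|lia].
Qed.

Lemma sqrt_pow2_abs (a : R) : sqrt (a ^ 2) = Rabs a.
Proof. rewrite <- pow2_abs. apply sqrt_pow2, Rabs_pos. Qed.

Lemma euclid_dist_ge_coord0 (d : nat) (x y : Rd d) :
  Rabs (coord x 0 - coord y 0) <= euclid_dist d x y.
Proof.
  unfold euclid_dist. rewrite <- sqrt_pow2_abs. apply sqrt_le_1_alt.
  apply (sum_f_R0_ge_first (fun i => (coord x i - coord y i) ^ 2)).
  intro i. apply pow2_ge_0.
Qed.

Lemma euclid_dist_eq_coord0 (d : nat) (x y : Rd d) :
  (forall i, (1 <= i)%nat -> coord x i = coord y i) ->
  euclid_dist d x y = Rabs (coord x 0 - coord y 0).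
Proof.
  intro H. unfold euclid_dist.
  rewrite (sum_f_R0_eq_first (fun i => (coord x i - coord y i) ^ 2)).
  - apply sqrt_pow2_abs.
  - intros i Hi. rewrite (H i Hi). ring.
Qed.

Lemma e1f_0 (d : nat) : (1 <= d)%nat -> e1f d 0 = 1.
Proof. intro H. unfold e1f. simpl. destruct (Nat.ltb_spec 0 d); [reflexivity|lia]. Qed.

Lemma e1f_S (d i : nat) : e1f d (S i) = 0.
Proof. reflexivity. Qed.

Definition axis_point (d : nat) (t : R) : Rd d.
Proof.
  refine (exist _ (fun i => t * e1f d i) _).
  intros i Hi. rewrite (e1f_out d i Hi). ring.
Defined.

Lemma coord0_axis_point (d : nat) (t : R) : (1 <= d)%nat -> coord (axis_point d t) 0 = t.
Proof. intro H. unfold coord, axis_point; simpl. rewrite e1f_0 by exact H. ring. Qed.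

Lemma euclid_dist_translate_axis_point (d : nat) (a b : R) : (1 <= d)%nat ->
  euclid_dist d (translate d (axis_point d a)) (axis_point d b) = Rabs (a + 1 - b).
Proof.
  intro H. rewrite euclid_dist_eq_coord0.
  - unfold coord; simpl. rewrite e1f_0 by exact H. rewrite !Rmult_1_r. reflexivity.
  - intros [|i] Hi; [lia|]. unfold coord; simpl. rewrite e1f_S. ring.
Qed.

Lemma coord_iter_translate (d k : nat) (y : Rd d) (i : nat) :
  coord (Nat.iter k (translate d) y) i = coord y i + INR k * e1f d i.
Proof.
  induction k as [|k IH]; simpl Nat.iter; [simpl; ring|].
  unfold translate at 1, coord at 1; simpl proj1_sig.
  fold (coord (Nat.iter k (translate d) y) i). rewrite IH, S_INR. ring.
Qed.

Lemma coord_iter_translate_inv (d k : nat) (y : Rd d) (i : nat) :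
  coord (Nat.iter k (translate_inv d) y) i = coord y i - INR k * e1f d i.
Proof.
  induction k as [|k IH]; simpl Nat.iter; [simpl; ring|].
  unfold translate_inv at 1, coord at 1; simpl proj1_sig.
  fold (coord (Nat.iter k (translate_inv d) y) i). rewrite IH, S_INR. ring.
Qed.

Lemma coord_Zpow_translate (d : nat) (n : Z) (y : Rd d) (i : nat) :
  coord (Zpow (translate d) (translate_inv d) n y) i = coord y i + IZR n * e1f d i.
Proof.
  destruct n as [|p|p]; simpl Zpow.
  - change (IZR 0) with 0. ring.
  - rewrite coord_iter_translate, INR_IPR. reflexivity.
  - rewrite coord_iter_translate_inv, INR_IPR. change (IZR (Zneg p)) with (- IPR p). ring.
Qed.

Definition eps_decay (d : nat) (x : Rd d) : R := / (1 + Rabs (coord x 0)).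

Lemma Rabs_inv_1_plus_Rabs_sub_le (a b : R) :
  Rabs (/ (1 + Rabs b) - / (1 + Rabs a)) <= Rabs (b - a).
Proof.
  pose proof (Rabs_pos a); pose proof (Rabs_pos b).
  assert (Hq : 0 < / ((1 + Rabs a) * (1 + Rabs b)) <= 1).
  { split; [apply Rinv_0_lt_compat; nra|].
    rewrite <- Rinv_1. apply Rinv_le_contravar; nra. }
  replace (/ (1 + Rabs b) - / (1 + Rabs a)) with
    ((Rabs a - Rabs b) * / ((1 + Rabs a) * (1 + Rabs b))) by (field; lra).
  rewrite Rabs_mult, (Rabs_right (/ _)) by lra.
  pose proof (Rabs_triang_inv2 a b). rewrite (Rabs_minus_sym b a).
  pose proof (Rabs_pos (Rabs a - Rabs b)). nra.
Qed.

Lemma eps_decay_Cplus (d : nat) : Cplus (euclid_dist d) (eps_decay d).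
Proof.
  split.
  - intro x. unfold eps_decay. apply Rinv_0_lt_compat. pose proof (Rabs_pos (coord x 0)). lra.
  - intros x eta Heta. exists eta. split; [exact Heta|].
    intros y Hy. unfold eps_decay. eapply Rle_lt_trans; [apply Rabs_inv_1_plus_Rabs_sub_le|].
    pose proof (euclid_dist_ge_coord0 d x y). rewrite Rabs_minus_sym. lra.
Qed.

Definition jump_orbit (d : nat) (s : R) (n : Z) : Rd d :=
  axis_point d (if (n <=? 0)%Z then IZR n else IZR n + s).

Lemma jump_orbit_pseudo_orbit (d : nat) (delta : Rd d -> R) (s : R) : (1 <= d)%nat ->
  (forall x, 0 < delta x) -> 0 < s < delta (translate d (axis_point d 0)) ->
  pseudo_orbit (euclid_dist d) (translate d) delta (jump_orbit d s).
Proof.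
  intros hd Hdelta Hs n. unfold jump_orbit at 1 2.
  rewrite euclid_dist_translate_axis_point, plus_IZR by exact hd.
  destruct (Z.leb_spec n 0) as [Hn|Hn]; destruct (Z.leb_spec (n + 1) 0) as [Hn1|Hn1];
    try lia.
  - replace (IZR n + 1 - (IZR n + 1)) with 0 by ring. rewrite Rabs_R0. apply Hdelta.
  - assert (n = 0%Z) by lia; subst n.
    replace (IZR 0 + 1 - (IZR 0 + 1 + s)) with (- s) by ring.
    rewrite Rabs_Ropp, Rabs_right by lra. exact (proj2 Hs).
  - replace (IZR n + s + 1 - (IZR n + 1 + s)) with 0 by ring.
    rewrite Rabs_R0. apply Hdelta.
Qed.

Lemma shadowing_axis_point_coord0 (d : nat) (n : Z) (y : Rd d) (t : R) : (1 <= d)%nat ->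
  euclid_dist d (Zpow (translate d) (translate_inv d) n y) (axis_point d t)
    < eps_decay d (axis_point d t) ->
  Rabs (coord y 0 + IZR n - t) < / (1 + Rabs t).
Proof.
  intros hd Hn. unfold eps_decay in Hn. rewrite coord0_axis_point in Hn by exact hd.
  eapply Rle_lt_trans; [|exact Hn].
  pose proof (euclid_dist_ge_coord0 d (Zpow (translate d) (translate_inv d) n y)
    (axis_point d t)) as Hc.
  rewrite coord_Zpow_translate, coord0_axis_point, e1f_0, Rmult_1_r in Hc by exact hd.
  exact Hc.
Qed.

Lemma jump_orbit_not_shadowed (d : nat) (s : R) : (1 <= d)%nat -> 0 < s ->
  ~ eps_shadowed (euclid_dist d) (translate d) (translate_inv d) (eps_decay d) (jump_orbit d s).
Proof.
  intros hd Hs [y Hy].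
  set (n := up (2 / s)).
  assert (Hn : 2 / s < IZR n) by apply archimed.
  assert (Hns : 2 < IZR n * s).
  { apply (Rmult_lt_compat_r s) in Hn; [|lra].
    unfold Rdiv in Hn. rewrite Rmult_assoc, Rinv_l in Hn by lra. lra. }
  assert (Hn0 : (0 < n)%Z).
  { apply lt_IZR. assert (0 < 2 / s) by (apply Rdiv_lt_0_compat; lra). lra. }
  set (m := IZR n) in *. set (c := coord y 0).
  assert (Hm : 0 < m) by exact (IZR_lt 0 n Hn0).
  assert (Hpast : Rabs c < / (1 + m)).
  { pose proof (shadowing_axis_point_coord0 d (- n) y (IZR (- n)) hd) as Hc.
    unfold jump_orbit in Hy. specialize (Hy (- n)%Z).
    replace ((- n <=? 0)%Z) with true in Hy by (symmetry; apply Z.leb_le; lia).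
    specialize (Hc Hy). rewrite opp_IZR in Hc. fold m c in Hc.
    rewrite Rabs_Ropp, (Rabs_right m) in Hc by lra. replace (c + - m - - m) with c in Hc by ring. exact Hc. }
  assert (Hfuture : Rabs (c - s) < / (1 + m)).
  { pose proof (shadowing_axis_point_coord0 d n y (IZR n + s) hd) as Hc.
    unfold jump_orbit in Hy. specialize (Hy n).
    replace ((n <=? 0)%Z) with false in Hy by (symmetry; apply Z.leb_gt; lia).
    specialize (Hc Hy). fold m c in Hc. rewrite (Rabs_right (m + s)) in Hc by lra.
    replace (c + m - (m + s)) with (c - s) in Hc by ring.
    eapply Rlt_le_trans; [exact Hc|]. apply Rinv_le_contravar; lra. }
  assert (Hsplit : s <= Rabs c + Rabs (c - s)).
  { pose proof (Rabs_triang c (- (c - s))) as Htri.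
    rewrite Rabs_Ropp in Htri. replace (c + - (c - s)) with s in Htri by ring.
    rewrite Rabs_right in Htri by lra. exact Htri. }
  assert (Hu : / (1 + m) * (1 + m) = 1) by (field; lra).
  assert (0 < / (1 + m)) by (apply Rinv_0_lt_compat; lra).
  nra.
Qed.

Theorem mainTheorem10 (d : nat) (hd : (1 <= d)%nat) :
  ~ topological_shadowing (euclid_dist d) (translate d) (translate_inv d).
Proof.
  intro Hsh.
  destruct (Hsh (eps_decay d) (eps_decay_Cplus d)) as [delta [[Hdelta _] Hshadow]].
  set (s := delta (translate d (axis_point d 0)) / 2).
  assert (Hs : 0 < s < delta (translate d (axis_point d 0))).
  { unfold s. specialize (Hdelta (translate d (axis_point d 0))). lra. }
  apply (jump_orbit_not_shadowed d s hd (proj1 Hs)), Hshadow.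
  exact (jump_orbit_pseudo_orbit d delta s hd Hdelta Hs).
Qed.
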